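(* Let $(X,d_X)$ be a metric space. (i) $X$ has the uniform Stone property if and only if $\Delta_X^{(u)}(r)>0$ for all $r>0$. (ii) $X$ has the coarse Stone property if and only if $\Delta_X^{(c)}(R)<\infty$ for all $R\in[0,\infty)$.
   Context: A family $\mathcal{U}$ of subsets of $X$ with union $X$ is a cover. $\mathrm{diam}(\mathcal{U})=\sup_{U\in\mathcal{U}}\mathrm{diam}(U)$; the Lebesgue number is $\mathcal{L}(\mathcal{U})=\sup\{d\in[0,\infty): \text{every } E\subseteq X \text{ with } \mathrm{diam}(E)<d \text{ is contained in some } U\in\mathcal{U}\}$. $\mathcal{U}$ is uniform if $\mathcal{L}(\mathcal{U})>0$, uniformly bounded if $\mathrm{diam}(\mathcal{U})<\infty$, point-finite if each point lies in only finitely many members. A cover $\mathcal{V}$ refines $\mathcal{U}$ if each $V\in\mathcal{V}$ is contained in some $U\in\mathcal{U}$. $X$ has the uniform Stone property if every uniform cover of $X$ has a point-finite uniform refinement; $X$ has the coarse Stone property if every uniformly bounded cover of $X$ refines a point-finite uniformly bounded cover. $\Delta_X^{(u)}(r)=\sup\{\mathcal{L}(\mathcal{U}): \mathcal{U} \text{ point-finite cover},\ \mathrm{diam}(\mathcal{U})\leq r\}$ and $\Delta_X^{(c)}(R)=\inf\{\mathrm{diam}(\mathcal{U}): \mathcal{U} \text{ point-finite cover},\ \mathcal{L}(\mathcal{U})\geq R\}$. *)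

From HB Require Import structures.
From mathcomp Require Import all_boot all_order all_algebra.
From mathcomp Require Import all_classical all_reals ereal.
Set Implicit Arguments. Unset Strict Implicit. Unset Printing Implicit Defensive.
Import Order.TTheory GRing.Theory Num.Theory.
Local Open Scope classical_set_scope.
Local Open Scope ring_scope.

Section Defs.
Variables (R : realType) (X : Type) (d : X -> X -> R).

Definition is_metric : Prop :=
  [/\ forall x y, 0 <= d x y,
      forall x y, d x y = 0 <-> x = y,
      forall x y, d x y = d y x &
      forall x y z, d x z <= d x y + d y z].

Local Open Scope ereal_scope.

(* diameter of a subset (diam of the empty set is 0), possibly +oo *)
Definition diam (E : set X) : \bar R :=
  ereal_sup ([set 0] `|` [set (d x y)%:E | x in E & y in E]).

Definition fdiam (U : set (set X)) : \bar R :=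
  ereal_sup ([set 0] `|` [set diam A | A in U]).

Definition is_cover (U : set (set X)) : Prop :=
  \bigcup_(A in U) A = setT.

Definition lebesgue (U : set (set X)) : \bar R :=
  ereal_sup [set r%:E | r in [set r : R | (0 <= r)%R /\
     forall E : set X, diam E < r%:E -> exists2 A, U A & E `<=` A]].

Definition uniform_cover (U : set (set X)) : Prop := 0 < lebesgue U.
Definition uniformly_bounded (U : set (set X)) : Prop := fdiam U < +oo.
Definition point_finite (U : set (set X)) : Prop :=
  forall x, finite_set [set A | U A /\ A x].
Definition refines (V U : set (set X)) : Prop :=
  forall B, V B -> exists2 A, U A & B `<=` A.

Definition uniform_Stone : Prop :=
  forall U, is_cover U -> uniform_cover U ->
    exists V, [/\ is_cover V, point_finite V, uniform_cover V & refines V U].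

Definition coarse_Stone : Prop :=
  forall U, is_cover U -> uniformly_bounded U ->
    exists V, [/\ is_cover V, point_finite V, uniformly_bounded V & refines U V].

Definition Delta_u (r : R) : \bar R :=
  ereal_sup [set lebesgue V | V in
    [set V | [/\ is_cover V, point_finite V & fdiam V <= r%:E]]].

Definition Delta_c (r : R) : \bar R :=
  ereal_inf [set fdiam V | V in
    [set V | [/\ is_cover V, point_finite V & r%:E <= lebesgue V]]].

End Defs.

(* Everything rests on the cover of X by all sets of diameter at most r: its
   Lebesgue number is at least r and its diameter at most r, so a point-finite
   cover refining it (uniform case) or coarsened from it (coarse case) witnesses
   the bound on Delta.  Conversely, a family whose diameter is below the
   Lebesgue number of a cover refines that cover; this compares the
   point-finite cover provided by the bound on Delta with a given cover. *)
From HB Require Import structures.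
From mathcomp Require Import all_boot all_order all_algebra.
From mathcomp Require Import all_classical all_reals ereal.
Set Implicit Arguments. Unset Strict Implicit. Unset Printing Implicit Defensive.
Import Order.TTheory GRing.Theory Num.Theory.
Local Open Scope classical_set_scope.
Local Open Scope ring_scope.

Lemma ereal_gt0_lbound (R : realType) (x : \bar R) :
  (0 < x)%E -> exists2 r : R, 0 < r & (r%:E < x)%E.
Proof.
case: x => [s||] //; last by exists 1; rewrite ?ltry.
rewrite lte_fin => s0; exists (s / 2); first exact: divr_gt0.
by rewrite lte_fin ltr_pdivrMr // ltr_pMr // ltr1n.
Qed.

Lemma ereal_lty_ubound (R : realType) (x : \bar R) :
  (x < +oo)%E -> exists2 r : R, 0 <= r & (x < r%:E)%E.
Proof.
case: x => [s||] // _; last by exists 0; rewrite ?ltNyr.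
by exists (`|s| + 1); rewrite ?lte_fin ?addr_ge0 // (le_lt_trans (ler_norm s)) ?ltrDl.
Qed.

Section Covers.
Variables (R : realType) (X : Type) (d : X -> X -> R).
Local Open Scope ereal_scope.

Lemma le_diam E F : E `<=` F -> diam d E <= diam d F.
Proof.
move=> EF; apply: ereal_sup_le => _ [->|[x Ex [y Ey <-]]]; first by left.
by right; exists x; [exact: EF | exists y => //; exact: EF].
Qed.

Lemma diam_le_fdiam U A : U A -> diam d A <= fdiam d U.
Proof. by move=> UA; apply: ereal_sup_ubound; right; exists A. Qed.

Lemma fdiam_ge0 U : 0 <= fdiam d U.
Proof. by apply: ereal_sup_ubound; left. Qed.

Lemma fdiam_le U (M : \bar R) :
  0 <= M -> (forall A, U A -> diam d A <= M) -> fdiam d U <= M.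
Proof. by move=> M0 UM; apply: ge_ereal_sup => _ [->|[A UA <-]] //; exact: UM. Qed.

Lemma lebesgue_ge U (r : R) : (0 <= r)%R ->
  (forall E, diam d E < r%:E -> exists2 A, U A & E `<=` A) ->
  r%:E <= lebesgue d U.
Proof. by move=> r0 Ur; apply: ereal_sup_ubound; exists r. Qed.

Lemma lebesgue_sub U (r : R) : r%:E < lebesgue d U ->
  forall E, diam d E <= r%:E -> exists2 A, U A & E `<=` A.
Proof.
move=> /ereal_sup_gt[_ [s [_ Us] <-] rs] E dE.
by apply: Us; exact: le_lt_trans dE rs.
Qed.

Lemma fdiam_refines V U : refines V U -> fdiam d V <= fdiam d U.
Proof.
move=> VU; apply: fdiam_le; first exact: fdiam_ge0.
by move=> B /VU[A UA BA]; exact: le_trans (le_diam BA) (diam_le_fdiam UA).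
Qed.

Lemma lebesgue_refines U V : refines U V -> lebesgue d U <= lebesgue d V.
Proof.
move=> UV; apply: ereal_sup_le => _ [r [r0 Ur] <-]; exists r => //; split => // E.
by move=> /Ur[A /UV[B VB AB] EA]; exists B => //; exact: subset_trans AB.
Qed.

Lemma fdiam_lt_lebesgue_refines V U :
  fdiam d V < lebesgue d U -> refines V U.
Proof.
move=> VU B VB; have fV : (fine (fdiam d V))%:E = fdiam d V.
  by rewrite fineK // ge0_fin_numE ?fdiam_ge0 // (lt_le_trans VU) ?leey.
by apply: (lebesgue_sub (r := fine (fdiam d V))); rewrite fV //; exact: diam_le_fdiam.
Qed.

Definition small_sets (r : R) : set (set X) := [set E | diam d E <= r%:E].

Lemma small_sets_cover (r : R) :
  (forall x, d x x = 0%R) -> (0 <= r)%R -> is_cover (small_sets r).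
Proof.
move=> d0 r0; apply/seteqP; split => // x _; exists [set x] => //.
by apply: ge_ereal_sup => _ [->|[_ -> [_ -> <-]]]; rewrite ?d0 lee_fin.
Qed.

Lemma fdiam_small_sets (r : R) : (0 <= r)%R -> fdiam d (small_sets r) <= r%:E.
Proof. by move=> r0; apply: fdiam_le; rewrite ?lee_fin. Qed.

Lemma lebesgue_small_sets (r : R) : (0 <= r)%R -> r%:E <= lebesgue d (small_sets r).
Proof. by move=> r0; apply: lebesgue_ge => // E /ltW; exists E. Qed.

Lemma uniform_Stone_Delta_u_gt0 : (forall x, d x x = 0%R) ->
  uniform_Stone d -> forall r : R, (0 < r)%R -> 0 < Delta_u d r.
Proof.
move=> d0 St r /[dup] r_gt0 /ltW r0.
have uC : uniform_cover d (small_sets r).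
  by apply: lt_le_trans (lebesgue_small_sets r0); rewrite lte_fin.
have [V [cV pV uV VC]] := St _ (small_sets_cover d0 r0) uC.
apply: (lt_le_trans uV); apply: ereal_sup_ubound; exists V => //; split => //.
exact: le_trans (fdiam_refines VC) (fdiam_small_sets r0).
Qed.

Lemma Delta_u_gt0_uniform_Stone :
  (forall r : R, (0 < r)%R -> 0 < Delta_u d r) -> uniform_Stone d.
Proof.
move=> Du U _ /ereal_gt0_lbound[r r0 rU].
have /ereal_sup_gt[_ [V [cV pV Vr] <-] uV] := Du r r0.
by exists V; split => //; apply: fdiam_lt_lebesgue_refines; exact: le_lt_trans Vr rU.
Qed.

Lemma coarse_Stone_Delta_c_lty : (forall x, d x x = 0%R) ->
  coarse_Stone d -> forall r : R, (0 <= r)%R -> Delta_c d r < +oo.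
Proof.
move=> d0 St r r0.
have bC : uniformly_bounded d (small_sets r).
  by apply: le_lt_trans (fdiam_small_sets r0) _; exact: ltry.
have [V [cV pV bV CV]] := St _ (small_sets_cover d0 r0) bC.
apply: le_lt_trans bV; apply: ereal_inf_lbound; exists V => //; split => //.
exact: le_trans (lebesgue_small_sets r0) (lebesgue_refines CV).
Qed.

Lemma Delta_c_lty_coarse_Stone :
  (forall r : R, (0 <= r)%R -> Delta_c d r < +oo) -> coarse_Stone d.
Proof.
move=> Dc U _ /ereal_lty_ubound[r r0 Ur].
have /ereal_inf_lt[_ [V [cV pV rV] <-] bV] := Dc r r0.
by exists V; split => //; apply: fdiam_lt_lebesgue_refines; exact: lt_le_trans Ur rV.
Qed.

End Covers.

Theorem proposition3p3 (R : realType) (X : Type) (d : X -> X -> R) :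
  is_metric d ->
  (uniform_Stone d <-> forall r : R, 0 < r -> (0 < Delta_u d r)%E) /\
  (coarse_Stone d <-> forall r : R, 0 <= r -> (Delta_c d r < +oo)%E).
Proof.
case=> _ d_eq0 _ _; have d0 x : d x x = 0 by apply/d_eq0.
split; split.
- exact: uniform_Stone_Delta_u_gt0.
- exact: Delta_u_gt0_uniform_Stone.
- exact: coarse_Stone_Delta_c_lty.
- exact: Delta_c_lty_coarse_Stone.
Qed.
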